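(* Let $\bar O=O_1,\dots,O_k$ be fresh propositional constants. If $\Gamma\vdash_{\bar O}t:A;\Delta$ and $t\triangleright^*t'$, then $\Gamma\vdash_{\bar O}t':A;\Delta$.
   Context: $\lambda\mu$-terms: $t::= x\mid \lambda x.t\mid (t\;t)\mid \mu a.t\mid (a\;t)$ over disjoint infinite sets of $\lambda$-variables and $\mu$-variables. Reduction $(\lambda x.u\;v)\triangleright u[x:=v]$, $(\mu a.u\;v)\triangleright\mu a.u[a:=^*v]$ ($u[a:=^*v]$ replaces each subterm $(a\;w)$ of $u$ by $(a\;(w\;v))$), $\triangleright^*$ reflexive transitive compatible closure. Types are built from propositional variables, the constants $O_1,\dots,O_k$, and $\perp$ with $\to$. An $\bar O$-type is defined by: each $O_i$ is an $\bar O$-type; if $B$ is an $\bar O$-type then $A\to B$ is an $\bar O$-type. The system $\vdash_{\bar O}$: (ax) $\Gamma\vdash_{\bar O}x:A;\Delta$ if $x:A\in\Gamma$, provided $\Delta$ contains no declaration $a:C$ with $C$ an $\bar O$-type; ($\to_i$) from $\Gamma,x:A\vdash_{\bar O}t:B;\Delta$ infer $\Gamma\vdash_{\bar O}\lambda x.t:A\to B;\Delta$; ($\to_e$) from $\Gamma\vdash_{\bar O}u:A\to B;\Delta$ and $\Gamma\vdash_{\bar O}v:A;\Delta$ infer $\Gamma\vdash_{\bar O}(u\;v):B;\Delta$, provided $B$ is not an $\bar O$-type; ($\mu$) from $\Gamma\vdash_{\bar O}t:\perp;\Delta,a:A$ infer $\Gamma\vdash_{\bar O}\mu a.t:A;\Delta$;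 ($\perp$) from $\Gamma\vdash_{\bar O}t:A;\Delta,a:A$ infer $\Gamma\vdash_{\bar O}(a\;t):\perp;\Delta,a:A$. *)

(* lambda-mu calculus with de Bruijn indices (two separate
   index spaces: lambda-variables and mu-variables). *)
From Stdlib Require Import List Arith Relations Fin.
Import ListNotations.

Inductive ty (k : nat) : Type :=
| TVar : nat -> ty k
| TO   : Fin.t k -> ty k
| TBot : ty k
| TArr : ty k -> ty k -> ty k.
Arguments TVar {k}. Arguments TO {k}. Arguments TBot {k}. Arguments TArr {k}.

Inductive isOtype {k : nat} : ty k -> Prop :=
| isO_const : forall i, isOtype (TO i)
| isO_arr : forall A B, isOtype B -> isOtype (TArr A B).

(* Terms: Var n (lambda-variable), Lam t (binds a lambda-var), App,
   Mu t (binds a mu-var), Named a t = (a t). *)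
Inductive term : Type :=
| Var : nat -> term
| Lam : term -> term
| App : term -> term -> term
| Mu : term -> term
| Named : nat -> term -> term.

Fixpoint lift_l (c : nat) (t : term) : term :=
  match t with
  | Var n => if n <? c then Var n else Var (S n)
  | Lam u => Lam (lift_l (S c) u)
  | App u v => App (lift_l c u) (lift_l c v)
  | Mu u => Mu (lift_l c u)
  | Named a u => Named a (lift_l c u)
  end.

Fixpoint lift_m (c : nat) (t : term) : term :=
  match t with
  | Var n => Var n
  | Lam u => Lam (lift_m c u)
  | App u v => App (lift_m c u) (lift_m c v)
  | Mu u => Mu (lift_m (S c) u)
  | Named a u => Named (if a <? c then a else S a) (lift_m c u)
  end.

Fixpoint subst_l (j : nat) (v : term) (t : term) : term :=
  match t with
  | Var n => if n =? j then v else if j <? n then Var (pred n) else Var n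
  | Lam u => Lam (subst_l (S j) (lift_l 0 v) u)
  | App u w => App (subst_l j v u) (subst_l j v w)
  | Mu u => Mu (subst_l j (lift_m 0 v) u)
  | Named a u => Named a (subst_l j v u)
  end.

(* structural substitution u[j :=* v]: every subterm (j w) becomes (j (w v)) *)
Fixpoint ssubst (j : nat) (v : term) (t : term) : term :=
  match t with
  | Var n => Var n
  | Lam u => Lam (ssubst j (lift_l 0 v) u)
  | App u w => App (ssubst j v u) (ssubst j v w)
  | Mu u => Mu (ssubst (S j) (lift_m 0 v) u)
  | Named a u =>
      if a =? j then Named a (App (ssubst j v u) v)
      else Named a (ssubst j v u)
  end.

Inductive step : term -> term -> Prop :=
| step_beta : forall u v, step (App (Lam u) v) (subst_l 0 v u)
| step_mu : forall u v, step (App (Mu u) v) (Mu (ssubst 0 (lift_m 0 v) u))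
| step_lam : forall t t', step t t' -> step (Lam t) (Lam t')
| step_appl : forall u u' v, step u u' -> step (App u v) (App u' v)
| step_appr : forall u v v', step v v' -> step (App u v) (App u v')
| step_mub : forall t t', step t t' -> step (Mu t) (Mu t')
| step_named : forall a t t', step t t' -> step (Named a t) (Named a t').

Definition red : term -> term -> Prop := clos_refl_trans term step.

(* The system |-_{O-bar}:  typing k Gamma Delta t A  means  Gamma |- t : A ; Delta.
   Gamma (resp. Delta) lists the types of lambda- (resp. mu-) variables 0,1,2,... *)
Inductive typing {k : nat} : list (ty k) -> list (ty k) -> term -> ty k -> Prop :=
| ty_ax : forall G D n A,
    nth_error G n = Some A ->
    Forall (fun C => ~ isOtype C) D ->
    typing G D (Var n) A
| ty_lam : forall G D t A B,
    typing (A :: G) D t B -> typing G D (Lam t) (TArr A B)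
| ty_app : forall G D u v A B,
    typing G D u (TArr A B) -> typing G D v A -> ~ isOtype B ->
    typing G D (App u v) B
| ty_mu : forall G D t A,
    typing G (A :: D) t TBot -> typing G D (Mu t) A
| ty_named : forall G D a t A,
    nth_error D a = Some A -> typing G D t A -> typing G D (Named a t) TBot.

(** Typing is stable under weakening of either context, under λ-substitution
    and under structural substitution, so both redexes preserve types. The
    restrictions of [|-_Ō] matter only for the μ-redex [(μa.u v) ▷ μa.u[a:=*v]]:
    there [a] changes type from [A -> B] to [B], and the side condition of the
    axiom rule (no Ō-type in [Δ]) survives because the [(->e)] step that typed
    [(μa.u v)] guarantees that [B] is not an Ō-type. *)
From Stdlib Require Import List Arith Relations.
From Stdlib Require Import Lia.
Import ListNotations.

Section ListInsert.
Variable X : Type.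

Lemma nth_error_insert_lt (l1 l2 : list X) (x : X) n : n < length l1 ->
  nth_error (l1 ++ x :: l2) n = nth_error (l1 ++ l2) n.
Proof. intros; rewrite !nth_error_app1; auto. Qed.

Lemma nth_error_insert_ge (l1 l2 : list X) (x : X) n : length l1 <= n ->
  nth_error (l1 ++ x :: l2) (S n) = nth_error (l1 ++ l2) n.
Proof.
  intros; rewrite !nth_error_app2 by lia.
  replace (S n - length l1) with (S (n - length l1)) by lia; reflexivity.
Qed.

Lemma nth_error_insert_eq (l1 l2 : list X) (x : X) : nth_error (l1 ++ x :: l2) (length l1) = Some x.
Proof. rewrite nth_error_app2, Nat.sub_diag by lia; reflexivity. Qed.

Lemma nth_error_replace_neq (l1 l2 : list X) (x y : X) n : n <> length l1 ->
  nth_error (l1 ++ x :: l2) n = nth_error (l1 ++ y :: l2) n.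
Proof.
  intros Hn; destruct (Nat.ltb_spec n (length l1)).
  - rewrite !nth_error_app1; auto.
  - rewrite !nth_error_app2 by lia.
    destruct (n - length l1) eqn:E; [lia | reflexivity].
Qed.

Lemma Forall_insert (P : X -> Prop) (l1 l2 : list X) (x : X) :
  Forall P (l1 ++ l2) -> P x -> Forall P (l1 ++ x :: l2).
Proof. rewrite !Forall_app; intros [H1 H2] Hx; auto. Qed.

Lemma Forall_replace (P : X -> Prop) (l1 l2 : list X) (x y : X) :
  Forall P (l1 ++ x :: l2) -> P y -> Forall P (l1 ++ y :: l2).
Proof.
  rewrite !Forall_app; intros [H1 H2] Hy; inversion H2; auto.
Qed.

End ListInsert.

Section SubjectReduction.
Variable k : nat.

Lemma typing_mu_ctx_not_Otype (G D : list (ty k)) t (A : ty k) :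
  typing G D t A -> Forall (fun C => ~ isOtype C) D.
Proof.
  induction 1; auto.
  inversion IHtyping; auto.
Qed.

Lemma typing_lift_l (G1 G2 D : list (ty k)) t (A C : ty k) :
  typing (G1 ++ G2) D t A -> typing (G1 ++ C :: G2) D (lift_l (length G1) t) A.
Proof.
  remember (G1 ++ G2) as G eqn:E; intros Ht; revert G1 E.
  induction Ht; intros G1 E; subst; simpl.
  - destruct (Nat.ltb_spec n (length G1)); apply ty_ax; auto.
    + rewrite nth_error_insert_lt; auto.
    + rewrite nth_error_insert_ge; auto.
  - apply ty_lam; apply (IHHt (A :: G1)); reflexivity.
  - eapply ty_app; eauto.
  - apply ty_mu; auto.
  - eapply ty_named; eauto.
Qed.

Lemma typing_lift_m (G D1 D2 : list (ty k)) t (A C : ty k) : ~ isOtype C ->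
  typing G (D1 ++ D2) t A -> typing G (D1 ++ C :: D2) (lift_m (length D1) t) A.
Proof.
  intros HC; remember (D1 ++ D2) as D eqn:E; intros Ht; revert D1 E.
  induction Ht; intros D1 E; subst; simpl.
  - apply ty_ax; auto; apply Forall_insert; auto.
  - apply ty_lam; auto.
  - eapply ty_app; eauto.
  - apply ty_mu; apply (IHHt (A :: D1)); reflexivity.
  - eapply ty_named; eauto.
    destruct (Nat.ltb_spec a (length D1)).
    + rewrite nth_error_insert_lt; auto.
    + rewrite nth_error_insert_ge; auto.
Qed.

Lemma typing_subst_l (G1 G2 D : list (ty k)) t w (A B : ty k) :
  typing (G1 ++ A :: G2) D t B -> typing (G1 ++ G2) D w A ->
  typing (G1 ++ G2) D (subst_l (length G1) w t) B.
Proof.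
  remember (G1 ++ A :: G2) as G eqn:E; intros Ht; revert G1 w E.
  induction Ht; intros G1 w E Hw; subst; simpl.
  - destruct (Nat.eqb_spec n (length G1)) as [-> | Hne].
    + rewrite nth_error_insert_eq in H; injection H as <-; exact Hw.
    + destruct (Nat.ltb_spec (length G1) n); apply ty_ax; auto.
      * destruct n as [|n]; [lia|]; simpl.
        rewrite <- (nth_error_insert_ge _ G1 G2 A) by lia; auto.
      * rewrite <- (nth_error_insert_lt _ G1 G2 A) by lia; auto.
  - apply ty_lam; apply (IHHt (A0 :: G1)); auto.
    apply (typing_lift_l []); auto.
  - eapply ty_app; eauto.
  - apply ty_mu; apply IHHt; auto.
    apply (typing_lift_m _ []); auto.
    apply typing_mu_ctx_not_Otype in Ht; inversion Ht; auto.
  - eapply ty_named; eauto.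
Qed.

Lemma typing_ssubst (G D1 D2 : list (ty k)) t w (A B C : ty k) : ~ isOtype B ->
  typing G (D1 ++ TArr A B :: D2) t C -> typing G (D1 ++ B :: D2) w A ->
  typing G (D1 ++ B :: D2) (ssubst (length D1) w t) C.
Proof.
  intros HB; remember (D1 ++ TArr A B :: D2) as D eqn:E; intros Ht; revert D1 w E.
  induction Ht; intros D1 w E Hw; subst; simpl.
  - apply ty_ax; auto; eapply Forall_replace; eauto.
  - apply ty_lam; apply IHHt; auto.
    apply (typing_lift_l []); auto.
  - eapply ty_app; eauto.
  - apply ty_mu; apply (IHHt (A0 :: D1)); auto.
    apply (typing_lift_m _ []); auto.
    apply typing_mu_ctx_not_Otype in Ht; inversion Ht; auto.
  - destruct (Nat.eqb_spec a (length D1)) as [-> | Hne].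
    + rewrite nth_error_insert_eq in H; injection H as <-.
      eapply ty_named; [apply nth_error_insert_eq | eapply ty_app; eauto].
    + eapply ty_named; eauto.
      rewrite <- (nth_error_replace_neq _ _ _ (TArr A B)); auto.
Qed.

Lemma typing_step t t' : step t t' ->
  forall (G D : list (ty k)) A, typing G D t A -> typing G D t' A.
Proof.
  induction 1; intros G D T Ht.
  - inversion Ht as [| |? ? ? ? A ? Hu Hw| |]; subst.
    inversion Hu as [|? ? ? ? ? Hbody| | |]; subst.
    apply (typing_subst_l [] G D u v A T); auto.
  - inversion Ht as [| |? ? ? ? A ? Hu Hw HT| |]; subst.
    inversion Hu as [| | |? ? ? ? Hbody|]; subst.
    apply ty_mu, (typing_ssubst G [] D u _ A T TBot); auto.
    apply (typing_lift_m G [] D v A T); auto.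
  - inversion Ht; subst; apply ty_lam; auto.
  - inversion Ht; subst; eapply ty_app; eauto.
  - inversion Ht; subst; eapply ty_app; eauto.
  - inversion Ht; subst; apply ty_mu; auto.
  - inversion Ht; subst; eapply ty_named; eauto.
Qed.

End SubjectReduction.

Theorem mainTheorem17 (k : nat) (G D : list (ty k)) (t t' : term) (A : ty k) :
  typing G D t A -> red t t' -> typing G D t' A.
Proof.
  intros Ht Hr; revert G D A Ht.
  induction Hr; eauto using typing_step.
Qed.
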